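(* In the setting described in the context, for all $\lambda>0$ and all $t\ge0$: if $R_{t\infty}>0$ then $L^{(\lambda)}_{t\infty}=\infty$, whereas if $L^{(\lambda)}_{t\infty}<\infty$ then $R_{t\infty}=0$.
   Context: Let $(\Omega,\mathcal F,\mathbb P)$ be a probability space with a filtration $\{\mathcal F_t\}_{t\ge0}$ satisfying the usual conditions; (in)equalities between random variables hold a.s. A pricing kernel is an $\{\mathcal F_t\}$-adapted càdlàg semimartingale $\{\pi_t\}_{t\ge0}$ with (a) $\pi_t>0$, (b) $\mathbb E[\pi_t]<\infty$ for all $t\ge0$, (c) $\liminf_{t\to\infty}\mathbb E[\pi_t]=0$. Fix such a pricing kernel and set $P_{tT}=\pi_t^{-1}\mathbb E[\pi_T\mid\mathcal F_t]$ for $0\le t<T$. Define the exponential rate $R_{tT}=-(T-t)^{-1}\ln P_{tT}$ and, for $\lambda>0$, the tail-Pareto rate $L^{(\lambda)}_{tT}$ by $P_{tT}=\left[1+\lambda^{-1}(T-t)L^{(\lambda)}_{tT}\right]^{-\lambda}$, i.e. $L^{(\lambda)}_{tT}=\lambda(T-t)^{-1}(P_{tT}^{-1/\lambda}-1)$. For a family $\{A_x\}_{x\in\mathbb R^+}$ of $\mathcal F_t$-measurable extended-real random variables, $\limsup_{x\to\infty}A_x:=\operatorname{ess\,inf}_{x}\operatorname{ess\,sup}_{y\ge x}A_y$, with essential supremum/infimum taken among $\mathcal F_t$-measurable random variables. The long rates are $R_{t\infty}=\limsup_{T\to\infty}R_{tT}$ and $L^{(\lambda)}_{t\infty}=\limsup_{T\to\infty}L^{(\lambda)}_{tT}$.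 *)

From HB Require Import structures.
From mathcomp Require Import all_boot all_order all_algebra.
From mathcomp Require Import all_classical all_reals all_analysis measurable_realfun.
Set Implicit Arguments. Unset Strict Implicit. Unset Printing Implicit Defensive.
Import Order.TTheory GRing.Theory Num.Theory.
Import numFieldNormedType.Exports.
Local Open Scope classical_set_scope.
Local Open Scope ring_scope.

Section PricingKernel.
Context {d : measure_display} {Om : measurableType d} {R : realType}.
Variable P : probability Om R.

Definition sub_sigma_algebra (G : set (set Om)) : Prop :=
  [/\ (forall A, G A -> measurable A), G setT,
      (forall A, G A -> G (~` A)) &
      (forall A : nat -> set Om, (forall n, G (A n)) -> G (\bigcup_n A n))].

Definition Gmeas (G : set (set Om)) (X : Om -> R) : Prop :=
  forall B : set R, measurable B -> G (X @^-1` B).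
Definition Gmeas_e (G : set (set Om)) (X : Om -> \bar R) : Prop :=
  forall B : set (\bar R), measurable B -> G (X @^-1` B).

Definition filtration (F : R -> set (set Om)) : Prop :=
  (forall t, 0 <= t -> sub_sigma_algebra (F t)) /\
  (forall s t, 0 <= s -> s <= t -> F s `<=` F t).

Definition usual_conditions (F : R -> set (set Om)) : Prop :=
  (forall t A, 0 <= t -> (forall s, t < s -> F s A) -> F t A) /\
  (forall N M, measurable M -> P M = 0%E -> N `<=` M -> F 0 N).

Definition rv_integrable (X : Om -> R) : Prop :=
  P.-integrable setT (EFin \o X).

Definition expectation (X : Om -> R) : \bar R := (\int[P]_x (X x)%:E)%E.

Definition cond_exp_version (G : set (set Om)) (X Y : Om -> R) : Prop :=
  [/\ Gmeas G Y, rv_integrable Y &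
      forall A, G A -> (\int[P]_(x in A) (Y x)%:E = \int[P]_(x in A) (X x)%:E)%E].

Definition adapted (F : R -> set (set Om)) (X : R -> Om -> R) : Prop :=
  forall t, 0 <= t -> Gmeas (F t) (X t).

Definition cadlag (X : R -> Om -> R) : Prop :=
  forall w, (forall s, 0 <= s -> (fun u => X u w) @ s^'+ --> X s w) /\
            (forall s, 0 < s -> cvg ((fun u => X u w) @ s^'-)).

Definition martingale (F : R -> set (set Om)) (M : R -> Om -> R) : Prop :=
  [/\ adapted F M, (forall t, 0 <= t -> rv_integrable (M t)) &
      forall s u, 0 <= s -> s <= u -> cond_exp_version (F s) (M u) (M s)].

Definition stopping_time (F : R -> set (set Om)) (tau : Om -> \bar R) : Prop :=
  (forall w, (0 <= tau w)%E) /\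
  (forall s, 0 <= s -> F s [set w | (tau w <= s%:E)%E]).

Definition stopped (M : R -> Om -> R) (tau : Om -> \bar R) : R -> Om -> R :=
  fun s w => M (fine (mine s%:E (tau w))) w.

Definition local_martingale (F : R -> set (set Om)) (M : R -> Om -> R) : Prop :=
  [/\ cadlag M, adapted F M &
      exists tau : nat -> Om -> \bar R,
        [/\ forall n, stopping_time F (tau n),
            forall n w, (tau n w <= tau n.+1 w)%E,
            {ae P, forall w, (fun n => tau n w) @ \oo --> +oo%E} &
            forall n, martingale F (stopped M (tau n))]].

Definition finite_variation (A : R -> Om -> R) : Prop :=
  forall w s, 0 <= s -> exists C : R,
    forall (n : nat) (u : nat -> R), u 0%N = 0 -> u n = s ->
      (forall i, (i < n)%N -> u i <= u i.+1) ->
      \sum_(i < n) `|A (u i.+1) w - A (u i) w| <= C.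

Definition semimartingale (F : R -> set (set Om)) (X : R -> Om -> R) : Prop :=
  [/\ cadlag X, adapted F X &
      exists M A : R -> Om -> R,
        [/\ local_martingale F M /\ (forall w, M 0 w = 0),
            cadlag A /\ adapted F A, finite_variation A,
            (forall w, A 0 w = 0) &
            {ae P, forall w, forall s, 0 <= s -> X s w = X 0 w + M s w + A s w}]].

Definition pricing_kernel (F : R -> set (set Om)) (pi : R -> Om -> R) : Prop :=
  [/\ semimartingale F pi,
      (forall t, 0 <= t -> {ae P, forall w, 0 < pi t w}),
      (forall t, 0 <= t -> rv_integrable (pi t)) &
      limf_einf (fun t => expectation (pi t)) (pinfty_nbhs R) = 0%E].

Definition is_ess_sup (G : set (set Om)) (I : set R) (A : R -> Om -> \bar R)
    (Z : Om -> \bar R) : Prop :=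
  [/\ Gmeas_e G Z,
      (forall y, I y -> {ae P, forall w, (A y w <= Z w)%E}) &
      forall W, Gmeas_e G W -> (forall y, I y -> {ae P, forall w, (A y w <= W w)%E}) ->
        {ae P, forall w, (Z w <= W w)%E}].

Definition is_ess_inf (G : set (set Om)) (I : set R) (A : R -> Om -> \bar R)
    (Z : Om -> \bar R) : Prop :=
  [/\ Gmeas_e G Z,
      (forall y, I y -> {ae P, forall w, (Z w <= A y w)%E}) &
      forall W, Gmeas_e G W -> (forall y, I y -> {ae P, forall w, (W w <= A y w)%E}) ->
        {ae P, forall w, (W w <= Z w)%E}].

Definition is_ess_limsup (G : set (set Om)) (D : set R) (A : R -> Om -> \bar R)
    (Z : Om -> \bar R) : Prop :=
  exists S : R -> Om -> \bar R,
    (forall x, 0 < x -> is_ess_sup G [set y | D y /\ x <= y] A (S x)) /\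
    is_ess_inf G [set x | 0 < x] S Z.

End PricingKernel.

(* exponential rate R_{tT} and tail-Pareto rate L^{(lam)}_{tT} of a bond price p *)
Definition exp_rate {R : realType} (t T p : R) : R := - ln p / (T - t).
Definition pareto_rate {R : realType} (lam t T p : R) : R :=
  lam / (T - t) * (p `^ (- lam^-1) - 1).

From Pilot Require Import Defs.
From HB Require Import structures.
From mathcomp Require Import all_boot all_order all_algebra.
From mathcomp Require Import all_classical all_reals all_analysis measurable_realfun.
From mathcomp Require Import ring lra.
Import Order.TTheory GRing.Theory Num.Theory.
Import numFieldNormedType.Exports.
Local Open Scope classical_set_scope.
Local Open Scope ring_scope.

(* For [T - t >= max 1 k^2] the elementary bound [k u - x <= e^u - 1] gives
   [k R_{tT} - lam <= L^(lam)_{tT}] pathwise, and this passes to the essential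
   limsups: [k R_{t oo} - lam <= L^(lam)_{t oo}] for every k.  Moreover
   [R_{t oo} >= 0]: on the F_t-event A where it is negative, P_{tT} >= 1 for all
   large T, so E[pi_t; A] <= E[pi_T], whose liminf vanishes; as pi_t > 0, A is
   null.  Letting k -> oo gives both claims. *)

Lemma expR_sub1_ge (R : realType) (k x u : R) :
  0 <= k -> 1 <= x -> k ^+ 2 <= x -> k * u - x <= expR u - 1.
Proof.
move=> k0 x1 kx; have expR0 := expR_gt0 u.
have [u0|u0] := leP u 0.
  have : k * u <= 0 by rewrite mulr_ge0_le0.
  lra.
have := expR_ge1Dxn 1 (ltW u0); rewrite (_ : 2`!%:R = 2) // => exp_ge.
have := sqr_ge0 (u / 2 - k); rewrite !expr2 in kx exp_ge *.
nra.
Qed.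

Lemma pareto_rate_ge_exp_rate (R : realType) (lam t T p k : R) :
  0 < lam -> 0 <= k -> 1 <= T - t -> k ^+ 2 <= T - t ->
  k * exp_rate t T p - lam <= pareto_rate lam t T p.
Proof.
rewrite /exp_rate /pareto_rate => lam0 k0 x1 kx; set x := T - t in x1 kx *.
have x0 : 0 < x by lra.
have lam_div_le : lam / x <= lam by rewrite ler_pdivrMr // ler_peMr // ltW.
have [->|p0] := eqVneq p 0.
  rewrite ln0 // powR0 ?oppr_eq0 ?invr_eq0 ?gt_eqF //.
  rewrite oppr0 mul0r mulr0; lra.
rewrite /powR (negbTE p0).
set u := - lam^-1 * ln p.
have -> : - ln p = lam * u by rewrite /u; field; rewrite gt_eqF.
have -> : k * (lam * u / x) - lam = lam / x * (k * u - x).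
  by field; rewrite gt_eqF.
by rewrite ler_pM2l ?divr_gt0 ?expR_sub1_ge.
Qed.

Lemma le_of_exp_rate_lt0 (R : realType) (t T c a : R) :
  0 < a -> t < T -> exp_rate t T (c / a) < 0 -> a <= c.
Proof.
rewrite /exp_rate mulNr oppr_lt0 => a0 tT.
rewrite pmulr_lgt0 ?invr_gt0 ?subr_gt0 // => ln_gt0.
rewrite -[a in a <= _]mul1r -ler_pdivlMr // leNgt; apply/negP => /ltW /ln_le0.
by rewrite leNgt ln_gt0.
Qed.

Section ereal_bounds.
Local Open Scope ereal_scope.

Lemma lee_scale_subE (R : realType) (k lam : R) (A S : \bar R) : (0 < k)%R ->
  (k%:E * A - lam%:E <= S) = (A <= (S + lam%:E) * (k^-1)%:E).
Proof.
move=> k0; have ik0 : (0 < k^-1)%R by rewrite invr_gt0.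
have kyy : k%:E * +oo = +oo by rewrite mulry gtr0_sg // mul1e.
have kNyNy : k%:E * -oo = -oo by rewrite mulrNy gtr0_sg // mul1e.
have yk : +oo * (k^-1)%:E = +oo by rewrite mulyr gtr0_sg // mul1e.
have Nyk : -oo * (k^-1)%:E = -oo by rewrite mulNyr gtr0_sg // mul1e.
case: A => [a| |]; case: S => [s| |].
- rewrite -EFinM -EFinB -EFinD -EFinM !lee_fin.
  by rewrite ler_pdivlMr // (mulrC k) lerBlDr.
- by rewrite addye // yk !leey.
- by rewrite addNye Nyk !leeNy_eq.
- by rewrite kyy addye // -EFinD -EFinM !leye_eq.
- by rewrite kyy addye // yk.
- by rewrite kyy addye // addNye Nyk.
- by rewrite kNyNy addNye !leNye.
- by rewrite kNyNy addNye !leNye.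
- by rewrite kNyNy addNye !leNye.
Qed.

Lemma scale_sub_le_pinfty {R : realType} {lam : R} {r L : \bar R} : 0 < r ->
  (forall n : nat, n.+1%:R%:E * r - lam%:E <= L) -> L = +oo.
Proof.
case: r => [r| |] //= r0 le_L; last first.
  by have := le_L 0%N; rewrite mulry gtr0_sg // mul1e addye // leye_eq => /eqP.
rewrite lte_fin in r0.
case: L le_L => [l| |] // le_L; last first.
  by have := le_L 0%N; rewrite -EFinM -EFinB leeNy_eq.
exfalso; have {le_L} := le_L (Num.truncn ((l + lam) / r)); rewrite -EFinM -EFinB lee_fin.
have := truncnS_gt ((l + lam) / r); rewrite ltr_pdivrMr //.
lra.
Qed.

Lemma scale_sub_le_fin_eq0 {R : realType} {lam : R} {r L : \bar R} :
  0 <= r -> L < +oo -> (forall n : nat, n.+1%:R%:E * r - lam%:E <= L) -> r = 0.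
Proof.
rewrite le_eqVlt => /predU1P[<- //|r0] L_fin /(scale_sub_le_pinfty r0) L_oo.
by rewrite L_oo ltxx in L_fin.
Qed.

Lemma limf_einf_lt {R : realType} {f : R -> \bar R} {c : \bar R} :
  limf_einf f (pinfty_nbhs R) < c -> forall M : R, exists2 T, (M < T)%R & f T < c.
Proof.
move=> lim_lt M.
have inf_lt : ereal_inf (f @` [set T | (M < T)%R]) < c.
  apply: le_lt_trans lim_lt; rewrite limf_einfE; apply: ereal_sup_ubound.
  by exists [set T | (M < T)%R] => //; exists M; split => //; rewrite num_real.
by have [_ [T MT <-] fT_lt] := ereal_inf_lt inf_lt; exists T.
Qed.

Lemma ae_notin_of_integral_le0 {d} {T : measurableType d} {R : realType}
    {mu : {measure set T -> \bar R}} {A : set T} {f : T -> R} :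
  measurable A -> mu.-integrable A (EFin \o f) -> {ae mu, forall w, (0 < f w)%R} ->
  \int[mu]_(w in A) (f w)%:E <= 0 -> {ae mu, forall w, ~ A w}.
Proof.
move=> mA intf f_gt0 int_le0.
have mf := measurable_int _ intf.
have abs_f : \int[mu]_(w in A) (f w)%:E = \int[mu]_(w in A) `|(f w)%:E|.
  apply: ae_eq_integral => //; first exact: measurableT_comp.
  by apply: filterS f_gt0 => w /ltW f_ge0 _; rewrite gee0_abs // lee_fin.
have : \int[mu]_(w in A) `|(EFin \o f) w| = 0.
  by apply/eqP; rewrite eq_le integral_ge0 // andbT -abs_f.
move=> /(ae_eq_integral_abs mu mA mf); apply: filterS2 f_gt0 => w f_gt0 f0 Aw.
by move: (f0 Aw) f_gt0 => [->]; rewrite ltxx.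
Qed.

End ereal_bounds.

Section pricing_kernel.
Context {d : measure_display} {Om : measurableType d} {R : realType}.
Variable P : probability Om R.
Local Open Scope ereal_scope.

Lemma Gmeas_e_comp (G : set (set Om)) (W : Om -> \bar R) (f : \bar R -> \bar R) :
  Gmeas_e G W -> measurable_fun setT f -> Gmeas_e G (f \o W).
Proof.
move=> mW mf B mB; rewrite comp_preimage; apply: mW.
by rewrite -[f @^-1` B]setTI; apply: mf.
Qed.

Lemma Gmeas_e_cst (G : set (set Om)) (c : \bar R) :
  Defs.sub_sigma_algebra G -> Gmeas_e G (fun=> c).
Proof.
case=> _ GT GC _ B mB; rewrite preimage_cst.
by case: ifPn => _ //; rewrite -setCT; apply: GC.
Qed.

Lemma ess_limsup_scale_le {G : set (set Om)} {D : set R} {A B : R -> Om -> \bar R}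
    {ZA ZB : Om -> \bar R} {k lam : R} : (0 < k)%R ->
  is_ess_limsup P G D A ZA -> is_ess_limsup P G D B ZB ->
  (exists z0 : R, forall y, D y -> (z0 <= y)%R ->
    {ae P, forall w, k%:E * A y w - lam%:E <= B y w}) ->
  {ae P, forall w, k%:E * ZA w - lam%:E <= ZB w}.
Proof.
move=> k0 [SA [SA_sup [ZAm ZA_lb _]]] [SB [SB_sup [_ _ ZB_glb]]] [z0 le_AB].
have m_scale : measurable_fun setT (fun a : \bar R => k%:E * a - lam%:E).
  by apply: emeasurable_funD => //; apply: emeasurable_funM.
have m_unscale : measurable_fun setT (fun b : \bar R => (b + lam%:E) * (k^-1)%:E).
  by apply: emeasurable_funM => //; apply: emeasurable_funD.
apply: ZB_glb => [|x x0]; first exact: Gmeas_e_comp ZAm m_scale.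
pose z := Num.max x z0.
have z0_gt0 : (0 < z)%R by rewrite lt_max x0.
have [SBm SB_ub _] := SB_sup x x0.
have SA_le : {ae P, forall w, SA z w <= (SB x w + lam%:E) * (k^-1)%:E}.
  have [_ _ SA_glb] := SA_sup z z0_gt0.
  apply: SA_glb => [|y [Dy zy]]; first exact: Gmeas_e_comp SBm m_unscale.
  have [xy z0y] : (x <= y)%R /\ (z0 <= y)%R by move: zy; rewrite ge_max => /andP.
  apply: filterS2 (le_AB y Dy z0y) (SB_ub y (conj Dy xy)) => w AB BS.
  by rewrite -lee_scale_subE // (le_trans AB BS).
apply: filterS2 (ZA_lb z z0_gt0) SA_le => w ZA_SA SA_SB.
by rewrite lee_scale_subE // (le_trans ZA_SA SA_SB).
Qed.

Lemma cond_exp_integral_le {G : set (set Om)} {X Y Z : Om -> R} {A : set Om} :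
  measurable A -> G A -> cond_exp_version P G X Y ->
  rv_integrable P X -> rv_integrable P Z ->
  {ae P, forall w, (0 <= X w)%R /\ (A w -> Z w <= Y w)%R} ->
  \int[P]_(w in A) (Z w)%:E <= Defs.expectation P X.
Proof.
rewrite /Defs.expectation => mA GA [_ intY int_eq] intX intZ [N [mN PN le_N]].
have outside_N w : ~ N w -> (0 <= X w)%R /\ (A w -> Z w <= Y w)%R.
  by move=> Nw; apply: contrapT => /le_N.
have mAN : measurable (A `\` N) by exact: measurableD.
have intS (f : Om -> R) (S : set Om) : measurable S ->
    rv_integrable P f -> P.-integrable S (EFin \o f).
  by move=> mS; apply: integrableS measurableT mS (subsetT _).
rewrite (negligible_integral mN mA (intS _ _ mA intZ) PN).
apply: (@le_trans _ _ (\int[P]_(w in A `\` N) (Y w)%:E)).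
  apply: (le_integral mAN); [exact: intS|exact: intS|].
  by move=> w /set_mem[Aw /outside_N[_ /(_ Aw)]]; rewrite lee_fin.
rewrite -(negligible_integral mN mA (intS _ _ mA intY) PN) int_eq //.
rewrite (negligible_integral mN mA (intS _ _ mA intX) PN).
apply: (@le_trans _ _ (\int[P]_(w in ~` N) (X w)%:E)).
  apply: ge0_subset_integral => //; first exact: measurableC.
    exact: measurable_funS (measurable_int _ intX).
  by move=> w /outside_N[X_ge0 _]; rewrite lee_fin.
by rewrite -setTD -(negligible_integral mN measurableT intX PN).
Qed.

Lemma ess_sup_exp_rate_ge0 {F : R -> set (set Om)} {G : set (set Om)}
    {C pi : R -> Om -> R} {t x : R} {S : Om -> \bar R} :
  Defs.sub_sigma_algebra G -> pricing_kernel P F pi -> (0 <= t)%R ->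
  (forall T, (t < T)%R -> cond_exp_version P G (pi T) (C T)) ->
  is_ess_sup P G [set T | (t < T)%R /\ (x <= T)%R]
    (fun T w => (exp_rate t T (C T w / pi t w))%:E) S ->
  {ae P, forall w, 0 <= S w}.
Proof.
move=> [G_meas _ _ _] [_ pi_gt0 pi_int pi_lim] t0 hC [Sm S_ub _].
pose A := [set w | S w < 0].
have GA : G A by have := Sm _ (emeasurable_itv `]-oo, 0%E[); rewrite set_itvNyo.
have mA : measurable A := G_meas _ GA.
have int_t : P.-integrable A (EFin \o pi t).
  exact: integrableS measurableT mA (subsetT _) (pi_int t t0).
have int_small eps : (0 < eps)%R -> \int[P]_(w in A) (pi t w)%:E <= eps%:E.
  move=> eps0.
  have lim_lt : limf_einf (fun T => Defs.expectation P (pi T)) (pinfty_nbhs R) < eps%:E.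
    by rewrite pi_lim lte_fin.
  have [T] := limf_einf_lt lim_lt (Num.max x t); rewrite gt_max => /andP[xT tT] ET_lt.
  have T0 : (0 <= T)%R by apply: le_trans t0 (ltW tT).
  apply: le_trans (ltW ET_lt).
  apply: (cond_exp_integral_le mA GA (hC T tT) (pi_int T T0) (pi_int t t0)).
  apply: filterS3 (S_ub T (conj tT (ltW xT))) (pi_gt0 t t0) (pi_gt0 T T0).
  move=> w rate_le pit_gt0 piT_gt0; split => [|Aw]; first exact: ltW.
  apply: le_of_exp_rate_lt0 pit_gt0 tT _.
  by rewrite -lte_fin (le_lt_trans rate_le Aw).
have int_le0 : \int[P]_(w in A) (pi t w)%:E <= 0.
  by apply/lee_addgt0Pr => e e0; rewrite add0e; exact: int_small.
apply: filterS (ae_notin_of_integral_le0 mA int_t (pi_gt0 t t0) int_le0).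
by move=> w; rewrite /A /= leNgt => /negP.
Qed.

End pricing_kernel.

(* C T is a version of E[pi_T | F_t], so that P_{tT} = C T / pi t. *)
Theorem proposition3 (d : measure_display) (Om : measurableType d) (R : realType)
  (P : probability Om R) (F : R -> set (set Om)) (pi : R -> Om -> R)
  (hF : filtration F) (hU : usual_conditions P F) (hpi : pricing_kernel P F pi)
  (lam t : R) (hlam : 0 < lam) (ht : 0 <= t)
  (C : R -> Om -> R)
  (hC : forall T, t < T -> cond_exp_version P (F t) (pi T) (C T))
  (Rinf Linf : Om -> \bar R)
  (hR : is_ess_limsup P (F t) [set T | t < T]
          (fun T w => (exp_rate t T (C T w / pi t w))%:E) Rinf)
  (hL : is_ess_limsup P (F t) [set T | t < T]
          (fun T w => (pareto_rate lam t T (C T w / pi t w))%:E) Linf) :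
  ({ae P, forall w, (0 < Rinf w)%E} -> {ae P, forall w, Linf w = +oo%E}) /\
  ({ae P, forall w, (Linf w < +oo)%E} -> {ae P, forall w, Rinf w = 0%E}).
Proof.
have G_sigma : Defs.sub_sigma_algebra (F t) := hF.1 t ht.
have scale_le n : {ae P, forall w, (n.+1%:R%:E * Rinf w - lam%:E <= Linf w)%E}.
  apply: (ess_limsup_scale_le P _ hR hL); first by rewrite ltr0n.
  exists (t + (n.+1%:R ^+ 2 + 1)) => T _ tT; apply: aeW => w.
  rewrite lee_fin; apply: pareto_rate_ge_exp_rate => //.
  - by have := sqr_ge0 (n.+1%:R : R); lra.
  - by lra.
have Rinf_ge0 : {ae P, forall w, (0 <= Rinf w)%E}.
  have [SR [SR_sup [_ _ Rinf_glb]]] := hR.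
  apply: Rinf_glb => [|x x0]; first exact: Gmeas_e_cst.
  exact: (ess_sup_exp_rate_ge0 P G_sigma hpi ht hC (SR_sup x x0)).
have {}scale_le := ae_foralln scale_le.
split => [Rinf_gt0|Linf_fin].
  by apply: filterS2 Rinf_gt0 scale_le => w; exact: scale_sub_le_pinfty.
by apply: filterS3 Rinf_ge0 Linf_fin scale_le => w; exact: scale_sub_le_fin_eq0.
Qed.
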